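(* For the dynamical network $N=F\circ T$, let $L=\max_{i\in\mathcal{I}}L_i$. If $L\rho(\Lambda)<1$, then $N$ has a globally attracting fixed point; that is, the interaction $F$ stabilizes the local systems $(T,X)$ if $L\ge 1$, and maintains their stability if $L<1$.
   Context: Let $\mathcal{I}=\{1,\dots,n\}$. For each $i\in\mathcal{I}$ let $(X_i,d)$ be a compact metric space and $T_i:X_i\to X_i$ with $L_i=\sup_{x_i\ne y_i}\frac{d(T_i(x_i),T_i(y_i))}{d(x_i,y_i)}<\infty$. $X=\prod_iX_i$ with $d_{\max}(x,y)=\max_id(x_i,y_i)$, and $T$ the product map $T(x)_i=T_i(x_i)$. A map $F:X\to X$ is an interaction if for every $j$ there are a nonempty $\mathcal{I}_j\subseteq\mathcal{I}$, a continuous $F_j:\prod_{i\in\mathcal{I}_j}X_i\to X_j$ with $F(x)_j=F_j(\{x_i\}_{i\in\mathcal{I}_j})$, and constants $\Lambda_{ij}\ge0$ with $d(F_j(\{x_i\}),F_j(\{y_i\}))\le\sum_{i\in\mathcal{I}_j}\Lambda_{ij}d(x_i,y_i)$; $\Lambda_{ij}=0$ for $i\notin\mathcal{I}_j$; $\Lambda=(\Lambda_{ij})$. The dynamical network is $N=F\circ T$. A globally attracting fixed point is a point $\tilde x\in X$ with $N^k(y)\to\tilde x$ for all $y\in X$. $F$ stabilizes $(T,X)$ if $\max_iL_i\ge1$ and $N$ has a globally attracting fixed point; $F$ maintains the stability of $(T,X)$ if $\max_iL_i<1$ and $N$ has a globally attracting fixed point. $\rho$ denotes spectral radius. *)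

From HB Require Import structures.
From mathcomp Require Import all_boot all_order all_algebra.
From mathcomp Require Import all_classical all_reals all_analysis.
From mathcomp Require Import complex.

Set Implicit Arguments.
Unset Strict Implicit.
Unset Printing Implicit Defensive.

Import Order.TTheory GRing.Theory Num.Theory.
Import numFieldTopology.Exports.
Local Open Scope classical_set_scope.
Local Open Scope ring_scope.

Definition lip_ratios {R : realType} (X : metricType R) (f : X -> X) : set R :=
  [set r | exists x y : X, x <> y /\ r = mdist (f x) (f y) / mdist x y].

(* L_f = sup_{x <> y} d(f x, f y) / d(x, y)  (meaningful when finite). *)
Definition lip_const {R : realType} (X : metricType R) (f : X -> X) : R :=
  sup (lip_ratios f).

Definition dmax {R : realType} {n : nat} (X : 'I_n -> metricType R)
  (x y : forall i, X i) : R :=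
  \big[Num.max/0]_(i < n) mdist (x i) (y i).

Definition prod_map {R : realType} {n : nat} (X : 'I_n -> metricType R)
  (T : forall i, X i -> X i) (x : forall i, X i) : forall i, X i :=
  fun i => T i (x i).

Definition restrict {R : realType} {n : nat} (X : 'I_n -> metricType R)
  (J : {set 'I_n}) (x : forall i, X i) :
  prod_topology (fun k : {i : 'I_n | i \in J} => X (sval k)) :=
  fun k => x (sval k).

Definition is_interaction {R : realType} {n : nat} (X : 'I_n -> metricType R)
  (F : (forall i, X i) -> (forall i, X i)) (Lam : 'M[R]_n) : Prop :=
  exists (I : 'I_n -> {set 'I_n})
         (Fj : forall j : 'I_n,
            prod_topology (fun k : {i : 'I_n | i \in I j} => X (sval k)) -> X j),
    forall j : 'I_n,
      I j != finset.set0 /\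
      continuous (Fj j) /\
      (forall x, F x j = Fj j (@restrict R n X (I j) x)) /\
      (forall i, 0 <= Lam i j) /\
      (forall i, i \notin I j -> Lam i j = 0) /\
      (forall x y : forall i, X i,
             mdist (F x j) (F y j) <=
             \sum_(i in I j) Lam i j * mdist (x i) (y i)).

Definition spectral_radius {R : realType} {n : nat} (A : 'M[R]_n) : R :=
  sup [set Normc.normc z | z in [set z : R[i] |
         eigenvalue (map_mx (fun r => (r%:C)%C) A) z]].

Definition has_global_attracting_fixed_point {R : realType} {n : nat}
  (X : 'I_n -> metricType R) (N : (forall i, X i) -> (forall i, X i)) : Prop :=
  exists xt : forall i, X i,
    N xt = xt /\
    forall y : forall i, X i,
      (fun k : nat => dmax (iter k N y) xt) @ \oo --> (0 : R).

Arguments is_interaction {R n} X F Lam.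
Arguments has_global_attracting_fixed_point {R n} X N.
Arguments prod_map {R n} X T x i.

From HB Require Import structures.
From mathcomp Require Import all_boot all_order all_algebra.
From mathcomp Require Import all_classical all_reals all_analysis.
From mathcomp Require Import complex spectral mxred.
From mathcomp Require Import ring lra.

Set Implicit Arguments.
Unset Strict Implicit.
Unset Printing Implicit Defensive.

Import Order.TTheory GRing.Theory Num.Theory.
Import numFieldTopology.Exports.
Local Open Scope classical_set_scope.
Local Open Scope ring_scope.

(* For x, y in the product, the vector u_k of coordinate distances between
   N^k x and N^k y satisfies u_(k+1) <= u_k (L Lam) entrywise, hence
   u_k <= u_0 (L Lam)^k because L Lam is nonnegative.  Since every eigenvalue
   of L Lam has modulus at most L rho(Lam) < 1, a Schur triangularisation
   followed by a diagonal rescaling yields a norm in which L Lam is a strict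
   contraction, so (L Lam)^k decays like c q^k with q < 1.  Thus N is
   eventually contracting for the max metric: every orbit is Cauchy,
   converges by compactness of the factors to a fixed point, and that fixed
   point attracts every other orbit. *)

Local Notation normc := (@Normc.normc _).
Local Notation toC A := (map_mx (fun r => (r%:C)%C) A).

Lemma eigenvalue_trig_diag (F : fieldType) n (A : 'M[F]_n) i :
  is_trig_mx A -> eigenvalue A (A i i).
Proof.
move=> Atrig; rewrite eigenvalue_root_char char_poly_trig //.
rewrite -(big_map (fun i : 'I_n => A i i) xpredT (fun a => 'X - a%:P)).
by rewrite root_prod_XsubC; apply: map_f; rewrite mem_index_enum.
Qed.

Lemma eigenvalue_conjmx_unit (F : fieldType) n (P A : 'M[F]_n) z :
  P \in unitmx -> eigenvalue (conjmx P A) z -> eigenvalue A z.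
Proof.
move=> Punit; apply: eigenvalue_conjmx; last by rewrite row_free_unit.
by rewrite submx_full // row_full_unit.
Qed.

Lemma eigenvalue_scalemx (F : fieldType) n (A : 'M[F]_n) a z :
  eigenvalue A z -> eigenvalue (a *: A) (a * z).
Proof.
move=> /eigenvalueP[v vA v0]; apply/eigenvalueP; exists v => //.
by rewrite -scalemxAr vA scalerA.
Qed.

Lemma iter_mulmxr_conjmx (F : fieldType) m n (P A : 'M[F]_n) k (y : 'M[F]_(m, n)) :
  P \in unitmx ->
  iter k (mulmxr A) y = iter k (mulmxr (conjmx P A)) (y *m invmx P) *m P.
Proof.
move=> Punit; elim: k => [|k IHk] /=; first by rewrite -mulmxA mulVmx ?mulmx1.
by rewrite IHk conjumx // -!mulmxA mulVmx ?mulmx1.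
Qed.

Lemma le_iter_mulmxr (R : numDomainType) n (B : 'M[R]_n) (u : nat -> 'rV[R]_n) :
  (forall i j, 0 <= B i j) -> (forall k j, u k.+1 0 j <= (u k *m B) 0 j) ->
  forall k j, u k 0 j <= iter k (mulmxr B) (u 0%N) 0 j.
Proof.
move=> B0 uB; elim=> [|k IHk] j //=.
apply: le_trans (uB k j) _; rewrite !mxE; apply: ler_sum => i _.
by rewrite ler_wpM2r.
Qed.

Section MatrixPowerDecay.
Variable R : rcfType.
Local Notation C := R[i].

Lemma normc_ge0 (z : C) : 0 <= normc z.
Proof. by case: z => a b; rewrite /Normc.normc sqrtr_ge0. Qed.

Lemma normc_real (r : R) : normc (r%:C)%C = `|r|.
Proof. by rewrite /Normc.normc /= expr0n /= addr0 sqrtr_sqr. Qed.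

Lemma normc_sum (I : Type) (s : seq I) (P : pred I) (F : I -> C) :
  normc (\sum_(i <- s | P i) F i) <= \sum_(i <- s | P i) normc (F i).
Proof.
elim/big_rec2: _ => [|i y1 y2 _ IH]; first by rewrite Normc.normc0.
exact: le_trans (le_normcD _ _) (lerD (lexx _) IH).
Qed.

Definition cnorm n (y : 'rV[C]_n) : R := \big[Num.max/0]_i normc (y 0 i).

(* With the weights eps^-i, the strictly lower part of a triangular matrix
   contributes only O(eps) to the induced operator norm. *)
Definition wnorm n (eps : R) (y : 'rV[C]_n) : R :=
  \big[Num.max/0]_(i < n) (eps ^- i * normc (y 0 i)).

Definition mxnormc m n (A : 'M[C]_(m, n)) : R := \sum_i \sum_j normc (A i j).

Lemma cnorm_ge0 n (y : 'rV[C]_n) : 0 <= cnorm y.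
Proof. exact: bigmax_ge_id. Qed.

Lemma normc_le_cnorm n (y : 'rV[C]_n) i : normc (y 0 i) <= cnorm y.
Proof. exact: (le_bigmax _ (fun i => normc (y 0 i))). Qed.

Lemma cnorm_le n (y : 'rV[C]_n) r :
  0 <= r -> (forall i, normc (y 0 i) <= r) -> cnorm y <= r.
Proof. by move=> r0 yr; apply: bigmax_le. Qed.

Lemma wnorm_ge0 n eps (y : 'rV[C]_n) : 0 <= wnorm eps y.
Proof. exact: bigmax_ge_id. Qed.

Lemma le_wnorm n eps (y : 'rV[C]_n) (i : 'I_n) : eps ^- i * normc (y 0 i) <= wnorm eps y.
Proof. exact: (le_bigmax _ (fun i : 'I_n => eps ^- i * normc (y 0 i))). Qed.

Lemma wnorm_le n eps (y : 'rV[C]_n) r :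
  0 <= r -> (forall i : 'I_n, eps ^- i * normc (y 0 i) <= r) -> wnorm eps y <= r.
Proof. by move=> r0 yr; apply: bigmax_le. Qed.

Lemma mxnormc_ge0 m n (A : 'M[C]_(m, n)) : 0 <= mxnormc A.
Proof. by apply: sumr_ge0 => i _; apply: sumr_ge0 => j _; exact: normc_ge0. Qed.

Lemma normc_le_mxnormc m n (A : 'M[C]_(m, n)) i j : normc (A i j) <= mxnormc A.
Proof.
have sum_ge0 k : 0 <= \sum_j normc (A k j) by apply: sumr_ge0 => *; exact: normc_ge0.
rewrite /mxnormc (bigD1 i) //= (bigD1 j) //= -addrA lerDl addr_ge0 //.
  by apply: sumr_ge0 => *; exact: normc_ge0.
by apply: sumr_ge0 => *.
Qed.

Lemma cnorm_le_wnorm n eps (y : 'rV[C]_n) :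
  0 < eps <= 1 -> cnorm y <= wnorm eps y.
Proof.
move=> /andP[eps0 eps1]; apply: cnorm_le => [|i]; first exact: wnorm_ge0.
apply: le_trans (le_wnorm eps y i); rewrite ler_peMl ?normc_ge0 //.
by rewrite invf_ge1 ?exprn_gt0 ?exprn_ile1 // ltW.
Qed.

Lemma wnorm_le_cnorm n eps (y : 'rV[C]_n) :
  0 < eps <= 1 -> wnorm eps y <= eps ^- n * cnorm y.
Proof.
move=> /andP[eps0 eps1]; have epsX_gt0 k : 0 < eps ^+ k by rewrite exprn_gt0.
apply: wnorm_le => [|i]; first by rewrite mulr_ge0 ?cnorm_ge0 // invr_ge0 ltW.
apply: ler_pM; rewrite ?normc_ge0 ?normc_le_cnorm ?invr_ge0 ?(ltW (epsX_gt0 _)) //.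
by rewrite lef_pV2 ?posrE //; apply: ler_wiXn2l (ltW eps0) eps1 _ _ (ltnW (ltn_ord i)).
Qed.

Lemma cnorm_mulmx m n (y : 'rV[C]_m) (A : 'M[C]_(m, n)) :
  cnorm (y *m A) <= mxnormc A * cnorm y.
Proof.
apply: cnorm_le => [|j]; first by rewrite mulr_ge0 ?mxnormc_ge0 ?cnorm_ge0.
rewrite mxE; apply: le_trans (normc_sum _ _ _) _.
apply: le_trans (_ : \sum_i cnorm y * normc (A i j) <= _).
  apply: ler_sum => i _; rewrite Normc.normcM.
  by rewrite ler_wpM2r ?normc_ge0 ?normc_le_cnorm.
rewrite -mulr_sumr mulrC ler_wpM2r ?cnorm_ge0 //.
apply: ler_sum => i _; rewrite (bigD1 j) //= lerDl.
by apply: sumr_ge0 => *; exact: normc_ge0.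
Qed.

Lemma eigenvalue_normc_le n (A : 'M[C]_n) z : eigenvalue A z -> normc z <= mxnormc A.
Proof.
move=> /eigenvalueP[v vA v0].
have [j vj0] : exists j, v 0 j != 0.
  apply/existsP; apply: contraNT v0 => /existsPn v0.
  by apply/eqP/matrixP => i j; rewrite (ord1 i) mxE; exact/eqP/negPn.
have [j0 _ vE] := @eq_bigmax _ _ _ 0 j xpredT (fun i => normc (v 0 i)) isT
  (fun i _ => normc_ge0 (v 0 i)).
have v_gt0 : 0 < normc (v 0 j0).
  rewrite -vE; apply: lt_le_trans (normc_le_cnorm v j); rewrite lt0r normc_ge0 andbT.
  by apply: contra vj0 => /eqP/Normc.eq0_normc ->.
rewrite -(ler_pM2r v_gt0) -Normc.normcM.
have -> : z * v 0 j0 = (v *m A) 0 j0 by rewrite vA !mxE.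
by rewrite -[X in _ * X]vE; apply: le_trans (normc_le_cnorm _ _) (cnorm_mulmx _ _).
Qed.

Lemma wnorm_trig_offdiag n (Tm : 'M[C]_n) eps (y : 'rV[C]_n) (i j : 'I_n) :
  is_trig_mx Tm -> 0 < eps <= 1 -> i != j ->
  eps ^- j * normc (y 0 i * Tm i j) <= eps * mxnormc Tm * wnorm eps y.
Proof.
move=> Ttrig /andP[eps0 eps1] neq_ij; rewrite Normc.normcM.
have W0 := wnorm_ge0 eps y; have M0 := mxnormc_ge0 Tm.
case: (ltngtP i j) => [lt_ij|lt_ji|eq_ij]; last by rewrite (val_inj eq_ij) eqxx in neq_ij.
  by rewrite (elimT is_trig_mxP Ttrig _ _ lt_ij) Normc.normc0 !mulr0 !mulr_ge0 // ltW.
have -> : eps ^- j = eps ^+ (i - j) * eps ^- i.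
  by rewrite expfB // mulrAC divff ?mul1r // gt_eqF ?exprn_gt0.
have -> : eps ^+ (i - j) * eps ^- i * (normc (y 0 i) * normc (Tm i j)) =
    (eps ^+ (i - j) * normc (Tm i j)) * (eps ^- i * normc (y 0 i)) by ring.
have eps_ij : eps ^+ (i - j) <= eps.
  rewrite -[X in _ <= X]expr1; apply: ler_wiXn2l (ltW eps0) eps1 _ _ _.
  by rewrite subn_gt0.
apply: ler_pM; last exact: le_wnorm.
- by rewrite mulr_ge0 ?normc_ge0 ?exprn_ge0 ?ltW.
- by rewrite mulr_ge0 ?normc_ge0 ?invr_ge0 ?exprn_ge0 ?ltW.
- apply: ler_pM => //; [exact: exprn_ge0 (ltW eps0)|exact: normc_ge0|].
  exact: normc_le_mxnormc.
Qed.

Lemma wnorm_trig_mulmx n (Tm : 'M[C]_n) (eps r : R) (y : 'rV[C]_n) :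
  is_trig_mx Tm -> 0 < eps <= 1 -> 0 <= r -> (forall i, normc (Tm i i) <= r) ->
  wnorm eps (y *m Tm) <= (r + eps * (mxnormc Tm * n%:R)) * wnorm eps y.
Proof.
move=> Ttrig eps01 r0 Tdiag; have [eps0 _] := andP eps01.
have W0 := wnorm_ge0 eps y; have M0 := mxnormc_ge0 Tm.
apply: wnorm_le => [|j].
  by rewrite mulr_ge0 // addr_ge0 // mulr_ge0 ?(ltW eps0) // mulr_ge0.
rewrite mxE; apply: le_trans (ler_wpM2l _ (normc_sum _ _ _)) _.
  by rewrite invr_ge0 exprn_ge0 // ltW.
rewrite mulr_sumr (bigD1 j) //= mulrDl; apply: lerD.
  rewrite Normc.normcM mulrA mulrC; apply: ler_pM; rewrite ?normc_ge0 ?Tdiag //.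
    by rewrite mulr_ge0 ?normc_ge0 ?invr_ge0 ?exprn_ge0 ?ltW.
  exact: le_wnorm.
apply: le_trans (_ : \sum_(i < n) eps * mxnormc Tm * wnorm eps y <= _).
  rewrite [X in _ <= X](bigD1 j) //= -[X in X <= _]add0r.
  apply: lerD; first by rewrite !mulr_ge0 // ltW.
  by apply: ler_sum => i; exact: wnorm_trig_offdiag.
by rewrite sumr_const card_ord -[X in X <= _]mulr_natr [eps * (_ * _)]mulrA mulrAC.
Qed.

Lemma exists_small_perturbation (r K : R) : 0 <= r < 1 -> 0 <= K ->
  exists2 eps : R, 0 < eps <= 1 & r + eps * K < 1.
Proof.
move=> /andP[r0 r1] K0; have d0 : 0 < 2 * (K + 1) by rewrite mulr_gt0 // ltr_wpDl.
exists ((1 - r) / (2 * (K + 1))).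
  by rewrite divr_gt0 ?subr_gt0 //= ler_pdivrMr // mul1r; lra.
by rewrite -ltrBrDl mulrAC ltr_pdivrMr //; nra.
Qed.

Lemma trig_wnorm_contraction n (Tm : 'M[C]_n) :
  is_trig_mx Tm -> (forall i, normc (Tm i i) < 1) ->
  exists eps q : R, [/\ 0 < eps <= 1, 0 <= q, q < 1 &
    forall y, wnorm eps (y *m Tm) <= q * wnorm eps y].
Proof.
move=> Ttrig Tdiag; pose r := \big[Num.max/0]_i normc (Tm i i).
have r0 : 0 <= r := bigmax_ge_id _ _ _ _.
have r1 : r < 1 by apply: bigmax_lt => // i _; exact: Tdiag.
have r01 : 0 <= r < 1 by rewrite r0 r1.
have [eps eps01 q1] :=
  exists_small_perturbation r01 (mulr_ge0 (mxnormc_ge0 Tm) (ler0n _ n)).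
have [eps0 _] := andP eps01.
exists eps, (r + eps * (mxnormc Tm * n%:R)); split => //.
  by rewrite addr_ge0 // !mulr_ge0 ?mxnormc_ge0 // ltW.
move=> y; apply: wnorm_trig_mulmx => // i.
exact: (le_bigmax _ (fun i => normc (Tm i i))).
Qed.

Lemma iter_mulmx_decay n (A : 'M[C]_n) :
  (forall z, eigenvalue A z -> normc z < 1) ->
  exists c q : R, [/\ 0 <= c, 0 <= q, q < 1 &
    forall k (y : 'rV[C]_n), cnorm (iter k (mulmxr A) y) <= c * q ^+ k * cnorm y].
Proof.
case: n A => [|n] A Aeig.
  by exists 0, 0; split=> // k y; rewrite /cnorm !big_ord0 mulr0.
have [P Punitary Ttrig] := Schur A (ltn0Sn n).
have Punit := unitarymx_unit Punitary.
have [|eps [q [eps01 q0 q1 Tstep]]] := trig_wnorm_contraction Ttrig.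
  by move=> i; apply/Aeig/(eigenvalue_conjmx_unit Punit)/eigenvalue_trig_diag.
have [eps0 _] := andP eps01.
have Tdecay k y : wnorm eps (iter k (mulmxr (conjmx P A)) y) <= q ^+ k * wnorm eps y.
  elim: k => [|k IHk]; first by rewrite mul1r.
  by rewrite exprS -mulrA; apply: le_trans (Tstep _) (ler_wpM2l q0 IHk).
set MP := mxnormc P; set MQ := mxnormc (invmx P).
exists (MP * (eps ^- n.+1 * MQ)), q; split => //.
  by rewrite !mulr_ge0 ?mxnormc_ge0 // invr_ge0 exprn_ge0 // ltW.
move=> k y; have -> : MP * (eps ^- n.+1 * MQ) * q ^+ k * cnorm y =
    MP * (q ^+ k * (eps ^- n.+1 * (MQ * cnorm y))) by ring.
rewrite (iter_mulmxr_conjmx _ _ _ Punit); apply: le_trans (cnorm_mulmx _ _) _.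
apply: ler_wpM2l; first exact: mxnormc_ge0.
apply: le_trans (cnorm_le_wnorm _ eps01) _; apply: le_trans (Tdecay _ _) _.
apply: ler_wpM2l; first exact: exprn_ge0.
apply: le_trans (wnorm_le_cnorm _ eps01) _.
apply: ler_wpM2l; last exact: cnorm_mulmx.
by rewrite invr_ge0 exprn_ge0 // ltW.
Qed.

Lemma real_iter_mulmx_decay n (A : 'M[R]_n) :
  (forall z, eigenvalue (toC A) z -> normc z < 1) ->
  exists c q : R, [/\ 0 <= c, 0 <= q, q < 1 &
    forall k (x : 'rV[R]_n) j,
      `|iter k (mulmxr A) x 0 j| <= c * q ^+ k * \big[Num.max/0]_i `|x 0 i|].
Proof.
move=> Aeig; have [c [q [c0 q0 q1 decay]]] := iter_mulmx_decay Aeig.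
exists c, q; split => // k x j.
have iter_toC : toC (iter k (mulmxr A) x) = iter k (mulmxr (toC A)) (toC x).
  by elim: k => [|k IHk] //=; rewrite map_mxM IHk.
have cnorm_toC : cnorm (toC x) = \big[Num.max/0]_i `|x 0 i|.
  by apply: eq_bigr => i _; rewrite mxE normc_real.
rewrite -normc_real -cnorm_toC.
have -> : ((iter k (mulmxr A) x 0 j)%:C)%C = toC (iter k (mulmxr A) x) 0 j by rewrite mxE.
by rewrite iter_toC; apply: le_trans (normc_le_cnorm _ _) (decay _ _).
Qed.

End MatrixPowerDecay.

Section SpectralRadius.
Variable R : realType.

Lemma spectral_radius_ge n (A : 'M[R]_n) z :
  eigenvalue (toC A) z -> normc z <= spectral_radius A.
Proof.
move=> Az; apply: ub_le_sup; last by exists z.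
by exists (mxnormc (toC A)) => _ [w Aw <-]; exact: eigenvalue_normc_le.
Qed.

Lemma scalemx_eigenvalue_lt1 n (A : 'M[R]_n) (L : R) z :
  0 <= L -> L * spectral_radius A < 1 -> eigenvalue (toC (L *: A)) z -> normc z < 1.
Proof.
move=> L0 LA; rewrite map_mxZ /=.
have [->|L_neq0] := eqVneq L 0.
  move=> /eigenvalueP[v]; rewrite scale0r mulmx0 => /esym/eqP.
  by rewrite scaler_eq0 => /orP[/eqP-> _|->//]; rewrite Normc.normc0.
have LC_neq0 : (L%:C)%C != 0 by rewrite eq_complex /= eqxx andbT.
move=> /(eigenvalue_scalemx (L%:C)%C^-1); rewrite scalerA mulVf // scale1r.
have L_gt0 : 0 < L by rewrite lt_def L_neq0.
move=> /spectral_radius_ge; rewrite Normc.normcM Normc.normcV normc_real ger0_norm //.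
rewrite -(ler_pM2l L_gt0) mulrA divff // mul1r => le_z.
exact: le_lt_trans le_z LA.
Qed.

End SpectralRadius.

Lemma mdist_le_lip_const (R : realType) (X : metricType R) (f : X -> X) x y :
  has_ubound (lip_ratios f) -> mdist (f x) (f y) <= lip_const f * mdist x y.
Proof.
move=> f_ub; have [->|xy] := eqVneq x y; first by rewrite !mdistxx mulr0.
rewrite -ler_pdivrMr ?mdist_gt0 //; apply: ub_le_sup => //.
by exists x, y; split => //; apply/eqP.
Qed.

Lemma geometric_sum_le (R : realFieldType) (q : R) p :
  0 <= q < 1 -> \sum_(t < p) q ^+ t <= (1 - q)^-1.
Proof.
move=> /andP[q0 q1]; have q1_gt0 : 0 < 1 - q by rewrite subr_gt0.
rewrite -(ler_pM2l q1_gt0) divff ?gt_eqF //.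
have -> : (1 - q) * \sum_(t < p) q ^+ t = 1 - q ^+ p.
  by rewrite -opprB mulNr -subrX1 opprB.
by rewrite gerBl exprn_ge0.
Qed.

Lemma cvg_geometric0 (R : realType) (C q : R) :
  `|q| < 1 -> (fun k => C * q ^+ k) @ \oo --> 0.
Proof. by move=> q1; rewrite -(mulr0 C); apply: cvgMr; exact: cvg_expr. Qed.

Lemma cvg0_geometric_bound (R : realType) (u : R ^nat) (C q : R) :
  0 <= q < 1 -> (forall k, 0 <= u k <= C * q ^+ k) -> u @ \oo --> 0.
Proof.
move=> /andP[q0 q1] u_le.
apply: (@squeeze_cvgr _ _ _ _ (fun=> 0) (fun k => C * q ^+ k)).
- by near=> k; exact: u_le.
- exact: cvg_cst.
- by apply: cvg_geometric0; rewrite ger0_norm.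
Unshelve. all: by end_near.
Qed.

Section MaxDistance.
Variables (R : realType) (n : nat) (X : 'I_n -> metricType R).
Implicit Types x y z : forall i, X i.

Lemma dmax_ge0 x y : 0 <= dmax x y.
Proof. exact: bigmax_ge_id. Qed.

Lemma mdist_le_dmax x y i : mdist (x i) (y i) <= dmax x y.
Proof. exact: (le_bigmax _ (fun i => mdist (x i) (y i))). Qed.

Lemma dmax_le x y r : 0 <= r -> (forall i, mdist (x i) (y i) <= r) -> dmax x y <= r.
Proof. by move=> r0 xy_le; apply: bigmax_le. Qed.

Lemma dmax_lt x y r : 0 < r -> (forall i, mdist (x i) (y i) < r) -> dmax x y < r.
Proof. by move=> r0 xy_lt; apply: bigmax_lt. Qed.

Lemma dmax_triangle x y z : dmax x z <= dmax x y + dmax y z.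
Proof.
apply: dmax_le => [|i]; first by rewrite addr_ge0 ?dmax_ge0.
exact: le_trans (metric_triangle _ (y i) _) (lerD (mdist_le_dmax _ _ _) (mdist_le_dmax _ _ _)).
Qed.

Lemma cvg_dmax0_coord (u : nat -> forall i, X i) x :
  (fun k => dmax (u k) x) @ \oo --> 0 -> forall i, (fun k => u k i) @ \oo --> x i.
Proof.
move=> ux i; apply/metricType_numDomainType.cvgrPdist_lt => e e0.
apply: filterS (cvgr0_norm_lt _ ux _ e0) => k /=.
rewrite ger0_norm ?dmax_ge0 // metric_sym; exact: le_lt_trans (mdist_le_dmax _ _ i).
Qed.

Lemma cvg_coord_dmax0 (u : nat -> forall i, X i) x :
  (forall i, (fun k => u k i) @ \oo --> x i) -> (fun k => dmax (u k) x) @ \oo --> 0.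
Proof.
move=> ux; apply/cvgr0Pnorm_lt => e e0.
have : \forall k \near \oo, forall i, mdist (x i) (u k i) < e.
  apply: filter_forall => i.
  by have /(_ eventually_filter) := metricType_numDomainType.cvgr_dist_lt (ux i) e0.
apply: filterS => k uk_near; rewrite ger0_norm ?dmax_ge0 //.
by apply: dmax_lt => // i; rewrite metric_sym; exact: uk_near.
Qed.

End MaxDistance.

(* [compact_cauchy_cvg] without its pointedness assumption: the factors X i
   carry no canonical point. *)
Lemma compact_cauchy_ex {T : uniformType} (F : set_system T) {PF : ProperFilter F} :
  cauchy F -> compact [set: T] -> exists x : T, F --> x.
Proof.
move=> cf /(_ F PF filterT) [x [_ clFx]]; exists x.
apply/cvg_entourageP => E entE.
have := cf (split_ent E) (entourage_split_ent entE).
move=> [] [D1 D2]/= /[!nbhs_simpl] -[FD1 FD2 D1D2E].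
have : nbhs x (xsection (split_ent E) x) by exact: nbhs_entourage.
move=> /(clFx _ (xsection (split_ent E) x) FD1)[z [Dz /xsectionP Exz]].
by near=> t; apply/(entourage_split z entE Exz)/D1D2E; split => //; near: t.
Unshelve. all: by end_near. Qed.

Section EventuallyContracting.
Variables (R : realType) (n : nat) (X : 'I_n -> metricType R).
Variable N : (forall i, X i) -> forall i, X i.
Variables c q : R.
Hypotheses (c0 : 0 <= c) (q01 : 0 <= q < 1).
Hypothesis iter_dmax_le :
  forall k x y, dmax (iter k N x) (iter k N y) <= c * q ^+ k * dmax x y.
Hypothesis X_compact : forall i, compact [set: X i].

Lemma orbit_dmax_le y m p :
  dmax (iter m N y) (iter (m + p) N y) <= c * dmax y (N y) / (1 - q) * q ^+ m.
Proof.
have [q0 q1] := andP q01.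
have step t : dmax (iter t N y) (iter t.+1 N y) <= c * dmax y (N y) * q ^+ t.
  by rewrite iterSr mulrAC; exact: iter_dmax_le.
apply: (@le_trans _ _ (c * dmax y (N y) * q ^+ m * \sum_(t < p) q ^+ t)).
  elim: p => [|p IHp].
    by rewrite big_ord0 mulr0 addn0; apply: dmax_le => // i; rewrite mdistxx.
  rewrite addnS big_ord_recr /= mulrDr.
  apply: le_trans (dmax_triangle _ (iter (m + p) N y) _) (lerD IHp _).
  by rewrite -mulrA -exprD; exact: step.
rewrite [X in _ <= X]mulrAC; apply: ler_wpM2l; last exact: geometric_sum_le.
by rewrite !mulr_ge0 ?dmax_ge0 ?exprn_ge0.
Qed.

Lemma orbit_cvg y i : exists xi : X i, (fun k => iter k N y i) @ \oo --> xi.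
Proof.
apply: (compact_cauchy_ex _ (@X_compact i)).
apply/cauchy_exP => e e0.
set K := c * dmax y (N y) / (1 - q).
have q_lt1 : `|q| < 1 by case/andP: q01 => q0 q1; rewrite ger0_norm.
have [m _ Km] := cvgr0_norm_lt _ (cvg_geometric0 K q_lt1) _ e0.
exists (iter m N y i); exists m => // k /= le_mk.
rewrite ballEmdist /= -(subnKC le_mk).
apply: le_lt_trans (le_trans (mdist_le_dmax _ _ i) (orbit_dmax_le y m _)) _.
exact: le_lt_trans (ler_norm _) (Km m (leqnn m)).
Qed.

Lemma orbit_limit_fixed y xt :
  (forall i, (fun k => iter k N y i) @ \oo --> xt i) -> N xt = xt.
Proof.
move=> y_xt.
have N_cvg : (fun k => dmax (iter k.+1 N y) (N xt)) @ \oo --> 0.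
  apply: (@squeeze_cvgr _ _ _ _ (fun=> 0) (fun k => c * q * dmax (iter k N y) xt)).
  - near=> k; rewrite dmax_ge0 /=.
    by have := iter_dmax_le 1 (iter k N y) xt; rewrite expr1.
  - exact: cvg_cst.
  - by rewrite -(mulr0 (c * q)); apply: cvgMr; exact: cvg_coord_dmax0.
apply: functional_extensionality_dep => i.
have xt_lim : (fun k => iter k.+1 N y i) @ \oo --> xt i.
  exact: cvg_comp (cvg_addnl 1) (y_xt i).
have N_lim := cvg_dmax0_coord (i := i) N_cvg.
by have := cvg_unique (@metric_hausdorff _ _) N_lim xt_lim; apply.
Unshelve. all: by end_near.
Qed.

Theorem eventually_contracting_attracting (y0 : forall i, X i) :
  has_global_attracting_fixed_point X N.
Proof.
have [xt y0_xt] : exists xt : forall i, X i, forall i, (fun k => iter k N y0 i) @ \oo --> xt i.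
  exists (fun i => projT1 (cid (orbit_cvg y0 i))) => i.
  exact: projT2 (cid (orbit_cvg y0 i)).
have xt_fixed := orbit_limit_fixed y0_xt.
have iter_xt k : iter k N xt = xt by elim: k => //= k ->.
exists xt; split => // y.
apply: (cvg0_geometric_bound (C := c * dmax y xt) q01) => k.
by rewrite dmax_ge0 -[X in dmax _ X](iter_xt k) mulrAC iter_dmax_le.
Qed.

End EventuallyContracting.

Section Network.
Variables (R : realType) (n : nat) (X : 'I_n -> metricType R).
Variables (T : forall i, X i -> X i) (F : (forall i, X i) -> forall i, X i).
Variables (Lam : 'M[R]_n) (L : R).
Hypothesis F_interaction : is_interaction X F Lam.
Hypothesis T_lip : forall i a b, mdist (@T i a) (@T i b) <= L * mdist a b.
Hypothesis L0 : 0 <= L.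

Local Notation N := (F \o prod_map X T).

Lemma interaction_ge0 i j : 0 <= Lam i j.
Proof. by have [I [Fj /(_ j) [_ [_ [_ [Lam0 _]]]]]] := F_interaction. Qed.

Lemma network_mdist_le x y j :
  mdist (N x j) (N y j) <= ((\row_i mdist (x i) (y i)) *m (L *: Lam)) 0 j.
Proof.
have [I [Fj /(_ j) [_ [_ [_ [_ [_ Fj_lip]]]]]]] := F_interaction.
apply: le_trans (Fj_lip _ _) _; rewrite mxE big_mkcond /=.
apply: ler_sum => i _; rewrite !mxE.
case: ifP => _; last by rewrite !mulr_ge0 ?mdist_ge0 ?interaction_ge0.
have -> : mdist (x i) (y i) * (L * Lam i j) = Lam i j * (L * mdist (x i) (y i)) by ring.
by apply: ler_wpM2l; [exact: interaction_ge0 | exact: T_lip].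
Qed.

Lemma network_iter_dmax_le c q : 0 <= c -> 0 <= q ->
  (forall k (v : 'rV[R]_n) j,
     `|iter k (mulmxr (L *: Lam)) v 0 j| <= c * q ^+ k * \big[Num.max/0]_i `|v 0 i|) ->
  forall k x y, dmax (iter k N x) (iter k N y) <= c * q ^+ k * dmax x y.
Proof.
move=> c0 q0 decay k x y.
pose u k : 'rV[R]_n := \row_i mdist (iter k N x i) (iter k N y i).
have LLam0 i j : 0 <= (L *: Lam) i j by rewrite mxE mulr_ge0 ?interaction_ge0.
have u_step k' j : u k'.+1 0 j <= (u k' *m (L *: Lam)) 0 j.
  by rewrite mxE; exact: network_mdist_le.
have dmaxE : dmax x y = \big[Num.max/0]_i `|u 0%N 0 i|.
  by apply: eq_bigr => i _; rewrite mxE ger0_norm ?mdist_ge0.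
apply: dmax_le => [|j]; first by rewrite !mulr_ge0 ?exprn_ge0 ?dmax_ge0.
have -> : mdist (iter k N x j) (iter k N y j) = u k 0 j by rewrite mxE.
apply: le_trans (le_iter_mulmxr LLam0 u_step k j) _.
by rewrite dmaxE; exact: le_trans (ler_norm _) (decay _ _ _).
Qed.

End Network.

Theorem corollary1 (R : realType) (n : nat) (X : 'I_n -> metricType R)
  (T : forall i : 'I_n, X i -> X i)
  (F : (forall i, X i) -> (forall i, X i)) (Lam : 'M[R]_n) :
  (forall i, compact [set: X i]) ->
  (forall i, exists x : X i, True) ->
  (forall i, has_ubound (lip_ratios (T i))) ->
  is_interaction X F Lam ->
  (\big[Num.max/0]_(i < n) lip_const (T i)) * spectral_radius Lam < 1 ->
  has_global_attracting_fixed_point X (F \o prod_map X T).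
Proof.
move=> X_compact X_inhabited T_ub F_interaction LrhoLam.
set L := \big[Num.max/0]_(i < n) lip_const (T i) in LrhoLam.
have L0 : 0 <= L by exact: bigmax_ge_id.
have T_lip i a b : mdist (T i a) (T i b) <= L * mdist a b.
  apply: le_trans (mdist_le_lip_const a b (T_ub i)) (ler_wpM2r (mdist_ge0 _ _) _).
  exact: (le_bigmax _ (fun i => lip_const (T i))).
have [c [q [c0 q0 q1 decay]]] :=
  real_iter_mulmx_decay (fun z => scalemx_eigenvalue_lt1 (z := z) L0 LrhoLam).
have q01 : 0 <= q < 1 by rewrite q0 q1.
have y0 i : X i := projT1 (cid (X_inhabited i)).
apply: (eventually_contracting_attracting c0 q01 _ X_compact y0).
by move=> k x y; apply: (network_iter_dmax_le F_interaction T_lip L0 c0 q0 decay).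
Qed.
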